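(* Let $\mathbf c^*=(c^*_1,\ldots,c^*_K)$ be such that $(\mathbf 0,\mathbf c^* )\in\mathcal A_K(\alpha_0)$, and let $\gamma$ be the common marginal size $\gamma=\omega(c_0,\sigma_{1,k},\nu_2,0,c_k^* )$, $k=1,\ldots,K$. Then $\gamma\ge\alpha_0$.
   Context: Multivariate setting. Fix an integer $K\ge2$, $c_0>0$, $\alpha_0\in(0,1/2)$, $\nu_2>0$, and a positive definite $K\times K$ matrix $\Sigma_1$ with diagonal entries $\sigma_{1,k}^2$. Let $\widehat{\boldsymbol\theta}\sim\mathcal N_K(\boldsymbol\theta,\Sigma_1)$ and $\widehat\Sigma_1$ be independent with $\nu_2\widehat\Sigma_1\sim W_K(\Sigma_1,\nu_2)$ (Wishart), and let $\widehat\sigma_{1,k}$ be the square root of the $k$th diagonal entry of $\widehat\Sigma_1$. For $\mathbf t\in[0,\infty)^K$, $\mathbf c\in(0,\infty)^K$ define $$\omega_K(\boldsymbol\theta,\Sigma_1,\nu_2,\mathbf t,\mathbf c)=\Pr\Big(\bigcap_{k=1}^K\{t_k\widehat\sigma_{1,k}-c_k<\widehat\theta_k<c_k-t_k\widehat\sigma_{1,k}\}\Big).$$ The marginal (univariate) rejection probability is $\omega(\theta,s,\nu_2,t,c)=\Pr(t\widehat\sigma-c<\widehat\theta<c-t\widehat\sigma)$ for independent $\widehat\theta\sim\mathcal N(\theta,s^2)$, $\nu_2\widehat\sigma^2/s^2\sim\chi^2_{\nu_2}$. Define $\mathcal A_K(\alpha_0)$ as the set of pairs $(\mathbf t,\mathbf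 c)$ with $\mathbf t\in[0,\infty)^K$, $\mathbf c\in(0,\infty)^K$, $\sup_{\boldsymbol\theta\notin(-c_0,c_0)^K}\omega_K(\boldsymbol\theta,\Sigma_1,\nu_2,\mathbf t,\mathbf c)=\alpha_0$, and $\omega(c_0,\sigma_{1,1},\nu_2,t_1,c_1)=\cdots=\omega(c_0,\sigma_{1,K},\nu_2,t_K,c_K)$ (equal marginal sizes). *)

From HB Require Import structures.
From mathcomp Require Import all_boot all_order all_algebra.
From mathcomp Require Import all_classical all_reals all_analysis.
Set Implicit Arguments. Unset Strict Implicit. Unset Printing Implicit Defensive.
Import Order.TTheory GRing.Theory Num.Theory.
Local Open Scope classical_set_scope.
Local Open Scope ring_scope.

Section Defs.
Variable R : realType.

Definition chi2_unnorm (nu u : R) : R := u `^ (nu / 2 - 1) * expR (- u / 2).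
Definition chi2_const (nu : R) : R :=
  fine (\int[@lebesgue_measure R]_(u in `]0%R, +oo[) (chi2_unnorm nu u)%:E)%E.
Definition chi2_pdf (nu u : R) : R := chi2_unnorm nu u / chi2_const nu.

(* univariate rejection probability
   omega(theta,s,nu,t,c) = Pr(t sh - c < thh < c - t sh),
   thh ~ N(theta, s^2), nu sh^2 / s^2 = U ~ chi2_nu, independent;
   i.e. sh = s * sqrt(U/nu), integrated against the chi2 law of U. *)
Definition omega1 (theta s nu t c : R) : R :=
  fine (\int[@lebesgue_measure R]_(u in `]0%R, +oo[)
     ((chi2_pdf nu u)%:E *
      normal_prob theta s
        `](t * (s * Num.sqrt (u / nu)) - c)%R, (c - t * (s * Num.sqrt (u / nu)))%R[%classic))%E.

Definition qform (K : nat) (M : 'M[R]_K) (x : 'I_K -> R) : R :=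
  \sum_(i < K) \sum_(j < K) x i * M i j * x j.

Definition posdef (K : nat) (M : 'M[R]_K) : Prop :=
  M^T = M /\ forall x : 'I_K -> R, (exists k, x k != 0) -> 0 < qform M x.

Definition psd (K : nat) (M : 'M[R]_K) : Prop :=
  M^T = M /\ forall x : 'I_K -> R, 0 <= qform M x.

Context {d : measure_display} {Omega : measurableType d}.
Variable P : probability Omega R.

(* Z = (Z_k) is N_K(0, Sigma) (Cramer-Wold definition: every nonzero linear
   combination a^T Z is N(0, a^T Sigma a)). *)
Definition mvnormal0 (K : nat) (Z : 'I_K -> Omega -> R) (Sigma : 'M[R]_K) : Prop :=
  (forall k, measurable_fun setT (Z k)) /\
  forall a : 'I_K -> R, (exists k, a k != 0) ->
    forall A : set R, measurable A ->
      P ((fun w => \sum_(k < K) a k * Z k w) @^-1` A) =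
      normal_prob 0 (Num.sqrt (qform Sigma a)) A.

Definition indep_vec_mx (K : nat) (Z : 'I_K -> Omega -> R)
    (S : 'I_K -> 'I_K -> Omega -> R) : Prop :=
  forall (A : 'I_K -> set R) (B : 'I_K -> 'I_K -> set R),
    (forall k, measurable (A k)) -> (forall i j, measurable (B i j)) ->
    let EZ := [set w | forall k, A k (Z k w)] in
    let ES := [set w | forall i j, B i j (S i j w)] in
    P (EZ `&` ES) = (P EZ * P ES)%E.

(* W ~ W_K(Sigma, nu): W is a.s. symmetric positive semidefinite and has
   Laplace transform E[exp(-tr(T W))] = det(I + 2 Sigma T)^(-nu/2)
   for every symmetric positive semidefinite T. *)
Definition wishart (K : nat) (W : Omega -> 'M[R]_K) (Sigma : 'M[R]_K) (nu : R) : Prop :=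
  (forall i j, measurable_fun setT (fun w => W w i j)) /\
  P [set w | psd (W w)] = 1%E /\
  forall T : 'M[R]_K, psd T ->
    (\int[P]_w (expR (- \tr (T *m W w)))%:E)%E =
    (powR (\det (1%:M + 2%:R *: (Sigma *m T))) (- (nu / 2)))%:E.

(* The multivariate probability omega_K(theta, Sigma1, nu2, t, c), where
   thetahat = theta + Z with Z ~ N_K(0,Sigma1) and Sigmahat = S. *)
Definition omegaK (K : nat) (Z : 'I_K -> Omega -> R) (S : 'I_K -> 'I_K -> Omega -> R)
    (theta t c : 'I_K -> R) : R :=
  fine (P [set w | forall k,
     t k * Num.sqrt (S k k w) - c k < theta k + Z k w /\
     theta k + Z k w < c k - t k * Num.sqrt (S k k w)]).

Definition in_AK (K : nat) (Z : 'I_K -> Omega -> R) (S : 'I_K -> 'I_K -> Omega -> R)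
    (Sigma1 : 'M[R]_K) (nu2 c0 alpha0 : R) (t c : 'I_K -> R) : Prop :=
  (forall k, 0 <= t k) /\ (forall k, 0 < c k) /\
  sup [set omegaK Z S theta t c | theta in [set theta | exists k, c0 <= `|theta k|]]
    = alpha0 /\
  (forall k l, omega1 c0 (Num.sqrt (Sigma1 k k)) nu2 (t k) (c k) =
               omega1 c0 (Num.sqrt (Sigma1 l l)) nu2 (t l) (c l)).

End Defs.

From HB Require Import structures.
From mathcomp Require Import all_boot all_order all_algebra.
From mathcomp Require Import all_classical all_reals all_analysis.
From mathcomp Require Import ring lra measurable_realfun exponential_distribution normal_distribution.
Import Order.TTheory GRing.Theory Num.Theory numFieldNormedType.Exports.
Local Open Scope classical_set_scope.
Local Open Scope ring_scope.

(* At t = 0 the studentized statistic does not involve the variance estimate, so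
   the chi-square mixing integrates out and
   omega(c0, s, nu, 0, c) = N(c0, s^2)(]-c, c[).  For theta outside (-c0, c0)^K
   pick j with |theta_j| >= c0: the joint acceptance event lies in the j-th
   marginal one, of probability N(theta_j, s_j^2)(]-c_j, c_j[).  As the Gaussian
   density is even and unimodal this mass decreases in |theta_j|, hence is at most
   N(c0, s_j^2)(]-c_j, c_j[) = gamma by the equal-size condition; taking the
   supremum over the null gives alpha0 <= gamma. *)

Section calculus.
Context {R : realType}.
Local Notation mu := (@lebesgue_measure R).

Lemma derivable_continuous_at (F : R -> R) (x : R) :
  derivable F x 1 -> F @ x --> F x.
Proof. by move=> /derivable1_diffP /differentiable_continuous. Qed.

Lemma integral_itv_oo_FTC (f F : R -> R) (a b : R) : a < b -> continuous f ->
  (forall x, derivable F x 1) -> (forall x, F^`()%classic x = f x) ->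
  (\int[mu]_(x in `]a, b[) (f x)%:E = (F b - F a)%:E)%E.
Proof.
move=> ab cf dF F'f.
rewrite -(@integral_itv_bndoo _ _ _ _ true false); last first.
  apply/measurable_EFinP.
  exact: measurable_funS (continuous_measurable_fun cf).
rewrite EFinB; apply: continuous_FTC2 => //.
- exact: continuous_subspaceT.
- split; first by move=> x _; exact: dF.
  + exact/cvg_at_right_filter/derivable_continuous_at.
  + exact/cvg_at_left_filter/derivable_continuous_at.
Qed.

End calculus.

Section normal_window.
Context {R : realType}.
Local Notation mu := (@lebesgue_measure R).
Variable s : R.
Hypothesis s_neq0 : s != 0.

Definition normal_cdf0 (x : R) : R :=
  (\int[mu]_(t in `]-oo, x]) normal_pdf 0 s t)%R.

Lemma normal_pdf0_opp (x : R) : normal_pdf 0 s (- x) = normal_pdf 0 s x.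
Proof. by rewrite !normal_pdfE // /normal_fun !subr0 sqrrN. Qed.

Lemma normal_pdf0_le (x y : R) :
  x ^+ 2 <= y ^+ 2 -> normal_pdf 0 s y <= normal_pdf 0 s x.
Proof.
move=> xy; rewrite !normal_pdfE //; apply: ler_wpM2l; first exact: normal_peak_ge0.
rewrite /normal_fun ler_expR !subr0 !mulNr lerN2; apply: ler_wpM2r => //.
by rewrite invr_ge0 mulrn_wge0 // sqr_ge0.
Qed.

Global Instance is_derive_normal_cdf0 (x : R) : is_derive x 1 normal_cdf0 (normal_pdf 0 s x).
Proof.
have [dF F'] : derivable normal_cdf0 x 1 /\ normal_cdf0^`()%classic x = normal_pdf 0 s x.
  apply: (@continuous_FTC1 _ _ -oo%O x (x + 1)).
  - by rewrite ltrDl.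
  - exact/(integrableS _ _ (@subsetT _ _))/integrable_normal_pdf.
  - exact: ltNyr.
  - exact: continuous_normal_pdf.
by apply: DeriveDef; rewrite -?derive1E.
Qed.

Lemma normal_cdf0D_opp (x : R) : normal_cdf0 x + normal_cdf0 (- x) = normal_cdf0 0 *+ 2.
Proof.
have /= := @is_derive_0_is_cst _ (fun t => normal_cdf0 t + normal_cdf0 (- t)) x 0.
rewrite oppr0 -mulr2n; apply => y.
by apply: trigger_derive; rewrite normal_pdf0_opp mulrN1 subrr.
Qed.

Lemma normal_prob_itv_oo (m a b : R) : a < b ->
  normal_prob m s `]a, b[ = (normal_cdf0 (b - m) - normal_cdf0 (a - m))%:E.
Proof.
move=> ab; apply: (@integral_itv_oo_FTC _ _ (fun x => normal_cdf0 (x - m))) => // [|x].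
  exact: continuous_normal_pdf.
have dF : is_derive x 1 (fun y => normal_cdf0 (y - m)) (normal_pdf 0 s (x - m)).
  by apply: trigger_derive; rewrite subr0 mulr1.
by rewrite derive1E derive_val !normal_pdfE // /normal_fun subr0.
Qed.

Definition normal_window (c t : R) : R := normal_cdf0 (c - t) - normal_cdf0 (- c - t).

Lemma normal_windowN (c t : R) : normal_window c (- t) = normal_window c t.
Proof.
have := normal_cdf0D_opp (c + t); have := normal_cdf0D_opp (c - t).
by rewrite /normal_window !opprD !opprK; lra.
Qed.

Lemma normal_window_nonincr (c a b : R) : 0 <= c -> 0 <= a -> a <= b ->
  normal_window c b <= normal_window c a.
Proof.
move=> c_ge0 a_ge0 ab.
have dW (t : R) : is_derive t (1 : R) (normal_window c)
    (normal_pdf 0 s (- c - t) - normal_pdf 0 s (c - t)).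
  by apply: trigger_derive; ring.
have : {in `[a, b] &, {homo normal_window c : x y /~ x <= y}}.
  apply: ler0_derive1_le_cc => [t _|t|].
  - exact: ex_derive.
  - rewrite in_itv /= => /andP[at_ _].
    rewrite derive1E derive_val subr_le0 -normal_pdf0_opp opprB addrC.
    by apply: normal_pdf0_le; rewrite -subr_ge0; nra.
  - by apply: continuous_subspaceT => t; apply/derivable_continuous_at/ex_derive.
by apply; rewrite ?in_itv /= ?lexx ?ab.
Qed.

Lemma normal_prob_window_le (c c0 th : R) : 0 < c -> 0 <= c0 -> c0 <= `|th| ->
  (normal_prob 0 s `](- c - th)%R, (c - th)%R[ <= normal_prob c0 s `](- c)%R, c[)%E.
Proof.
move=> c_gt0 c0_ge0 c0_th.
rewrite !normal_prob_itv_oo; [|lra|lra].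
rewrite !subr0 lee_fin -/(normal_window c th) -/(normal_window c c0).
have [th_ge0|th_lt0] := leP 0 th.
  by apply: normal_window_nonincr => //; [exact: ltW|rewrite -(ger0_norm th_ge0)].
rewrite -normal_windowN; apply: normal_window_nonincr => //; first exact: ltW.
by rewrite -(ltr0_norm th_lt0).
Qed.

End normal_window.

Section chi2_normalization.
Context {R : realType}.
Local Notation mu := (@lebesgue_measure R).

Lemma measurable_powR_EFin (a : R) (D : set R) :
  measurable_fun D (fun x : R => (x `^ a)%:E).
Proof.
apply/measurable_EFinP.
exact: measurable_funS measurableT (@subsetT _ D) (measurable_powR a).
Qed.

Lemma chi2_unnorm_ge0 (nu u : R) : 0 <= chi2_unnorm nu u.
Proof. by rewrite mulr_ge0 ?powR_ge0 ?expR_ge0. Qed.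

Lemma measurable_chi2_unnorm (nu : R) (D : set R) :
  measurable_fun D (fun u => (chi2_unnorm nu u)%:E).
Proof.
apply/measurable_EFinP.
apply: (measurable_funS measurableT (@subsetT _ D)).
apply: measurable_funM; first exact: measurable_powR.
apply: measurableT_comp; first exact: measurable_expR.
by apply: measurable_funM => //; exact: measurable_funN.
Qed.

Lemma integral_powR_itv_co_le (a e : R) : -1 < a -> 0 < e -> e < 1 ->
  (\int[mu]_(x in `[e, 1%R[) (x `^ a)%:E <= ((a + 1)^-1)%:E)%E.
Proof.
move=> a_gtN1 e_gt0 e_lt1.
have a1_gt0 : 0 < a + 1 by lra.
have cpow b x : 0 < x -> {for x, continuous (@powR R ^~ b)}.
  by move=> x_gt0; apply/derivable_continuous_at/derivable_powR; rewrite in_itv /= x_gt0.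
have FTC : (\int[mu]_(x in `[e, 1%R]) ((a + 1) * x `^ a)%:E =
            (1 `^ (a + 1))%:E - (e `^ (a + 1))%:E)%E.
  apply: (continuous_FTC2 (F := fun x : R => x `^ (a + 1))) => //.
  - apply: continuous_in_subspaceT => x /[!inE] /= /[!in_itv] /= /andP[ex _].
    by apply: cvgM; [exact: cvg_cst|apply: cpow; lra].
  - split.
    + move=> x /[!in_itv] /= /andP[ex _]; apply: derivable_powR.
      by rewrite in_itv /= andbT; lra.
    + by apply: cvg_at_right_filter; apply: cpow.
    + by apply: cvg_at_left_filter; apply: cpow.
  - move=> x /[!in_itv] /= /andP[ex _]; rewrite powR_derive1 ?addrK //.
    by rewrite in_itv /= andbT; lra.
rewrite integral_itv_bndo_bndc; last exact: measurable_powR_EFin.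
under eq_integral => x _ do
  rewrite -[x `^ a]mul1r -(mulVf (lt0r_neq0 a1_gt0)) -mulrA EFinM.
rewrite ge0_integralZl_EFin //; last 3 first.
- by move=> x _; rewrite lee_fin mulr_ge0 ?powR_ge0 //; lra.
- apply/measurable_EFinP/measurable_funM => //.
  exact: measurable_funS measurableT (@subsetT _ _) (measurable_powR a).
- by rewrite invr_ge0; lra.
rewrite FTC -EFinB -EFinM lee_fin powR1 ler_piMr ?invr_ge0 ?gerBl ?powR_ge0 //; lra.
Qed.

Lemma integral_powR_itv01_lt_pinfty (a : R) : -1 < a ->
  (\int[mu]_(x in `]0%R, 1%R[) (x `^ a)%:E < +oo)%E.
Proof.
move=> a_gtN1.
pose F : (set R)^nat := fun n => `[(n.+2%:R)^-1, 1%R[%classic.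
have F_nd : nondecreasing_seq F.
  move=> n m nm; apply/subsetPset => x; rewrite /F /= !in_itv /= => /andP[h1 ->].
  by rewrite andbT (le_trans _ h1) // lef_pV2 ?posrE // ler_nat !ltnS.
have UF : \bigcup_n F n = `]0%R, 1%R[%classic.
  apply/seteqP; split => x.
    by move=> [n _]; rewrite /F /= !in_itv /= => /andP[/(lt_le_trans _) -> //].
  rewrite /= in_itv /= => /andP[x_gt0 x_lt1].
  exists (Num.truncn x^-1) => //; rewrite /F /= in_itv /= x_lt1 andbT.
  rewrite -[leRHS](invrK x) lef_pV2 ?posrE ?invr_gt0 //.
  by apply/ltW/(lt_le_trans (truncnS_gt _)); rewrite ler_nat.
have cvgF := @ge0_nondecreasing_set_cvg_integral _ (measurableTypeR R) R F
  (fun x => (x `^ a)%:E) lebesgue_measure F_nd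
  (fun n => measurable_itv _) (fun n => measurable_powR_EFin a (F n))
  (fun n x _ => powR_ge0 _ _ : (0 <= (x `^ a)%:E)%E).
rewrite UF in cvgF; rewrite -(cvg_lim _ cvgF) //.
apply: (@le_lt_trans _ _ ((a + 1)^-1)%:E); last exact: ltry.
apply: lime_le; first by apply/cvg_ex; eexists; exact: cvgF.
apply: nearW => n; apply: integral_powR_itv_co_le => //.
by rewrite invf_lt1 // ltr1n.
Qed.

Lemma powR_expR_tail_le (a : R) : exists2 C : R, 0 <= C &
  forall u, 1 <= u -> u `^ a * expR (- u / 2) <= C * expR (- u / 4).
Proof.
set m := (Num.truncn a).+1.
exists (4 ^+ m * m`!%:R); first by rewrite mulr_ge0 // exprn_ge0.
move=> u u_ge1.
have pow_le : u `^ a <= u ^+ m.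
  by rewrite -powR_mulrn ?(le_trans ler01) //; apply/ler_powR/ltW/truncnS_gt.
have exp_ge : (u / 4) ^+ m <= m`!%:R * expR (u / 4).
  have fact_gt0 : (0 : R) < m`!%:R by rewrite ltr0n fact_gt0.
  rewrite -ler_pdivrMl // mulrC.
  have := @expR_ge1Dxn R (u / 4) (Num.truncn a) ltac:(lra); rewrite -/m.
  have : 0 <= (u / 4) ^+ m / m`!%:R by rewrite divr_ge0 ?exprn_ge0 //; lra.
  lra.
apply: (@le_trans _ _ (4 ^+ m * (m`!%:R * expR (u / 4)) * expR (- u / 2))).
  rewrite ler_wpM2r ?expR_ge0 // (le_trans pow_le) //.
  have -> : u ^+ m = 4 ^+ m * (u / 4) ^+ m by rewrite -exprMn; congr (_ ^+ _); field.
  by rewrite ler_wpM2l // exprn_ge0.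
rewrite -!mulrA -expRD (_ : u / 4 + - u / 2 = - u / 4) //; lra.
Qed.

Lemma chi2_unnorm_tail_lt_pinfty (nu : R) :
  (\int[mu]_(u in `[1%R, +oo[) (chi2_unnorm nu u)%:E < +oo)%E.
Proof.
have [C C_ge0 tail_le] := powR_expR_tail_le (nu / 2 - 1).
have r_gt0 : (0 : R) < 4^-1 by rewrite invr_gt0.
have mexp := measurable_exponential_pdf (4^-1 : R).
apply: (@le_lt_trans _ _
  (\int[mu]_(u in setT) ((4 * C)%:E * (exponential_pdf 4^-1 u)%:E))%E).
  apply: (@le_trans _ _
    (\int[mu]_(u in `[1%R, +oo[) ((4 * C)%:E * (exponential_pdf 4^-1 u)%:E))%E).
    apply: ge0_le_integral => //.
    - by move=> u _; rewrite lee_fin chi2_unnorm_ge0.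
    - exact: measurable_chi2_unnorm.
    - apply/measurable_EFinP/measurable_funM => //.
      exact: measurable_funS measurableT (@subsetT _ _) mexp.
    - move=> u /=; rewrite in_itv /= andbT => u_ge1.
      rewrite -EFinM lee_fin /exponential_pdf patchE mem_set /=; last first.
        by rewrite in_itv /= andbT; lra.
      rewrite (_ : - 4^-1 * u = - u / 4); last by field.
      rewrite (_ : 4 * C * (4^-1 * _) = C * expR (- u / 4)); last by field.
      exact: tail_le.
  apply: ge0_subset_integral => //.
  - exact/measurable_EFinP/measurable_funM.
  - by move=> u _; rewrite -EFinM lee_fin mulr_ge0 ?exponential_pdf_ge0 ?mulr_ge0 // ltW.
rewrite ge0_integralZl_EFin //; last 3 first.
- by move=> u _; rewrite lee_fin exponential_pdf_ge0 // ltW.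
- exact/measurable_EFinP.
- by rewrite mulr_ge0.
by rewrite integral_exponential_pdf // mule1 ltry.
Qed.

Lemma chi2_unnorm_integral_lt_pinfty (nu : R) : 0 < nu ->
  (\int[mu]_(u in `]0%R, +oo[) (chi2_unnorm nu u)%:E < +oo)%E.
Proof.
move=> nu_gt0.
have -> : `]0%R, +oo[%classic = `]0%R, 1%R[%classic `|` `[1%R, +oo[%classic :> set R.
  apply/seteqP; split => x /=; rewrite !in_itv /= ?andbT.
    by move=> x_gt0; case: (ltP x 1) => x1; [left|right] => //; rewrite x_gt0.
  by case=> [/andP[]//|]; lra.
rewrite ge0_integral_setU //; last 3 first.
- exact: measurable_chi2_unnorm.
- by move=> x _; rewrite lee_fin chi2_unnorm_ge0.
- by apply/disj_setPS => x /= [] /[!in_itv] /= /andP[_ x_lt1] x_ge1; lra.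
apply: lte_add_pinfty; last exact: chi2_unnorm_tail_lt_pinfty.
have a_gtN1 : -1 < nu / 2 - 1 by lra.
apply: (@le_lt_trans _ _ (\int[mu]_(x in `]0%R, 1%R[) (x `^ (nu / 2 - 1))%:E)%E);
  last exact: integral_powR_itv01_lt_pinfty.
apply: ge0_le_integral => //.
- by move=> x _; rewrite lee_fin chi2_unnorm_ge0.
- exact: measurable_chi2_unnorm.
- exact: measurable_powR_EFin.
- move=> x /= /[!in_itv] /= /andP[x_gt0 _]; rewrite lee_fin.
  by rewrite ler_piMr ?powR_ge0 // expR_le1; lra.
Qed.

Lemma chi2_unnorm_integral_gt0 (nu : R) : 0 < nu ->
  (0 < \int[mu]_(u in `]0%R, +oo[) (chi2_unnorm nu u)%:E)%E.
Proof.
move=> nu_gt0.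
(* on [1, 2], u `^ (nu / 2 - 1) >= u^-1 >= 1/2 and expR (- u / 2) >= expR (-1) *)
apply: (@lt_le_trans _ _ (\int[mu]_(u in `[1%R, 2%R]) (cst ((expR (-1) / 2)%:E) u))%E).
  rewrite integral_cst // [X in (_ * X)%E](_ : _ = 1%E).
    by rewrite mule1 lte_fin divr_gt0 ?expR_gt0.
  have := @lebesgue_measure_itv R `[1%R, 2%R].
  by rewrite /= lte_fin ltr1n -EFinD (_ : 2 - 1 = 1 :> R) //; lra.
apply: (@le_trans _ _ (\int[mu]_(u in `[1%R, 2%R]) (chi2_unnorm nu u)%:E)%E).
  apply: ge0_le_integral => //.
  - by move=> x _; rewrite lee_fin divr_ge0 ?expR_ge0.
  - exact: measurable_chi2_unnorm.
  - move=> x /= /[!in_itv] /= /andP[x_ge1 x_le2].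
    rewrite lee_fin /chi2_unnorm [leRHS]mulrC.
    apply: ler_pM; [exact: expR_ge0|by rewrite invr_ge0| |].
    + by rewrite ler_expR; lra.
    + apply: (@le_trans _ _ (x `^ (-1))); last by apply: ler_powR => //; lra.
      by rewrite powR_inv1 ?lef_pV2 ?posrE //; lra.
apply: ge0_subset_integral => //.
- exact: measurable_chi2_unnorm.
- by move=> x _; rewrite lee_fin chi2_unnorm_ge0.
- by move=> x /= /[!in_itv] /= /andP[x_ge1 _]; rewrite andbT; lra.
Qed.

Lemma integral_chi2_pdf (nu : R) : 0 < nu ->
  (\int[mu]_(u in `]0%R, +oo[) (chi2_pdf nu u)%:E = 1)%E.
Proof.
move=> nu_gt0.
have I_gt0 := chi2_unnorm_integral_gt0 nu nu_gt0.
have I_fin := chi2_unnorm_integral_lt_pinfty nu nu_gt0.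
have C_gt0 : 0 < chi2_const nu by apply: fine_gt0; rewrite I_gt0 I_fin.
have IE : (\int[mu]_(u in `]0%R, +oo[) (chi2_unnorm nu u)%:E)%E = (chi2_const nu)%:E.
  by rewrite fineK // ge0_fin_numE // ltW.
under eq_integral => u _ do rewrite /chi2_pdf mulrC EFinM.
rewrite ge0_integralZl_EFin //; last 3 first.
- by move=> x _; rewrite lee_fin chi2_unnorm_ge0.
- exact: measurable_chi2_unnorm.
- by rewrite invr_ge0 ltW.
by rewrite IE -EFinM mulVf // gt_eqF.
Qed.

Lemma omega1_t0 (c0 s nu c : R) : 0 < nu ->
  omega1 c0 s nu 0 c = fine (normal_prob c0 s `]- c, c[).
Proof.
move=> nu_gt0; rewrite /omega1.
under eq_integral => u _ do rewrite !mul0r sub0r subr0.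
rewrite ge0_integralZr ?integral_chi2_pdf ?mul1e //.
- apply/measurable_EFinP/measurable_funM => //.
  by have /measurable_EFinP := measurable_chi2_unnorm nu `]0%R, +oo[%classic.
- move=> u _; rewrite lee_fin divr_ge0 ?chi2_unnorm_ge0 // fine_ge0 // integral_ge0 //.
  by move=> x _; rewrite lee_fin chi2_unnorm_ge0.
Qed.

End chi2_normalization.

Section quadratic_form.
Context {R : realType}.

Lemma qform_delta (K : nat) (M : 'M[R]_K) (j : 'I_K) :
  qform M (fun i => (i == j)%:R) = M j j.
Proof.
rewrite /qform (bigD1 j) //= [X in _ + X]big1 => [|i ij]; last first.
  by apply: big1 => l _; rewrite (negbTE ij) !mul0r.
rewrite addr0 (bigD1 j) //= [X in _ + X]big1 => [|l lj]; last by rewrite (negbTE lj) mulr0.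
by rewrite eqxx mul1r mulr1 !addr0.
Qed.

Lemma posdef_diag_gt0 (K : nat) (M : 'M[R]_K) (j : 'I_K) : posdef M -> 0 < M j j.
Proof.
by move=> [_ M_pd]; rewrite -qform_delta; apply: M_pd; exists j; rewrite eqxx oner_neq0.
Qed.

End quadratic_form.

Section normal_vector.
Context {R : realType}.
Context {d : measure_display} {Omega : measurableType d} {P : probability Omega R}.
Context {K : nat} {Z : 'I_K -> Omega -> R} {Sigma : 'M[R]_K}.
Hypothesis Z_normal : mvnormal0 P Z Sigma.

Lemma mvnormal0_marginal (j : 'I_K) (A : set R) : measurable A ->
  P (Z j @^-1` A) = normal_prob 0 (Num.sqrt (Sigma j j)) A.
Proof.
move=> mA; have [_ cramer_wold] := Z_normal.
rewrite -qform_delta -cramer_wold //; last by exists j; rewrite eqxx oner_neq0.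
congr (P _); apply/funext => w /=.
rewrite (bigD1 j) //= [X in _ + X]big1 => [|i ij]; last by rewrite (negbTE ij) mul0r.
by rewrite eqxx mul1r addr0.
Qed.

Lemma omegaK_t0_le_marginal (S : 'I_K -> 'I_K -> Omega -> R) (th c : 'I_K -> R)
    (j : 'I_K) :
  omegaK P Z S th (fun _ => 0) c <=
  fine (normal_prob 0 (Num.sqrt (Sigma j j)) `](- c j - th j)%R, (c j - th j)%R[).
Proof.
have [mZ _] := Z_normal.
rewrite /omegaK; set E := [set w | forall k : 'I_K, _].
have EE : E = \bigcap_(i in [set: 'I_K])
    (Z i @^-1` `](- c i - th i)%R, (c i - th i)%R[%classic).
  apply/seteqP; split => w /= Ew i.
    move=> _; have := Ew i; rewrite /= in_itv /= !mul0r sub0r subr0 => -[? ?].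
    by apply/andP; split; lra.
  by have := Ew i I; rewrite /= in_itv /= !mul0r sub0r subr0 => /andP[? ?]; split; lra.
have mZ_itv i (a b : R) : measurable (Z i @^-1` `]a, b[%classic).
  by rewrite -[X in measurable X]setTI; apply: mZ.
have mE : measurable E.
  by rewrite EE; apply: fin_bigcap_measurable => //; exact: finite_finset.
rewrite -mvnormal0_marginal //.
apply: fine_le; [exact: fin_num_measure|exact: fin_num_measure|].
by apply: le_measure; rewrite ?inE // ?EE => // w /(_ j I).
Qed.

End normal_vector.

Theorem mainTheorem10 (R : realType) (d : measure_display) (Omega : measurableType d)
  (P : probability Omega R) (K : nat) (c0 alpha0 nu2 : R) (Sigma1 : 'M[R]_K)
  (Z : 'I_K -> Omega -> R) (S : 'I_K -> 'I_K -> Omega -> R) (cstar : 'I_K -> R) :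
  (2 <= K)%N -> 0 < c0 -> 0 < alpha0 -> alpha0 < 1 / 2 -> 0 < nu2 ->
  posdef Sigma1 ->
  mvnormal0 P Z Sigma1 ->
  (forall i j, measurable_fun setT (S i j)) ->
  wishart P (fun w => \matrix_(i, j) (nu2 * S i j w)) Sigma1 nu2 ->
  indep_vec_mx P Z S ->
  in_AK P Z S Sigma1 nu2 c0 alpha0 (fun _ => 0) cstar ->
  forall k : 'I_K, alpha0 <= omega1 c0 (Num.sqrt (Sigma1 k k)) nu2 0 (cstar k).
Proof.
move=> _ c0_gt0 _ _ nu2_gt0 Sigma_pd Z_normal _ _ _ [_ [c_gt0 [sup_null eq_marg]]] k.
rewrite -sup_null; apply: ge_sup.
  exists (omegaK P Z S (fun _ => c0) (fun _ => 0) cstar), (fun _ => c0) => //.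
  by exists k; rewrite ger0_norm // ltW.
move=> _ [th [j c0_th] <-].
apply: le_trans (omegaK_t0_le_marginal Z_normal S th cstar j) _.
rewrite (eq_marg k j) omega1_t0 //.
apply: fine_le; [exact: fin_num_measure|exact: fin_num_measure|].
apply: normal_prob_window_le => //; last exact: ltW.
by rewrite gt_eqF // sqrtr_gt0 posdef_diag_gt0.
Qed.
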